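(* For every $M\in\Lambda^{001}$, $H_r(\mathcal T(M))=\mathcal T(H(M))$.
   Context: $\Lambda^{001}$ is the set of possibly infinite λ-terms (trees of variables, abstractions $\lambda x.M$ and applications $(M)N$) whose infinite branches all enter infinitely often the argument position of an application, up to α-equivalence; $M[N/x]$ is capture-avoiding substitution. Every $M\in\Lambda^{001}$ is either of the form $\lambda x_1\dots\lambda x_m.(\dots((\lambda z.N)P)Q_1\dots)Q_n$ (with head redex $(\lambda z.N)P$) or of the form $\lambda x_1\dots\lambda x_m.(\dots((y)Q_1)\dots)Q_n$ (head normal form, hnf). $H(M)=\lambda x_1\dots\lambda x_m.(\dots((N[P/z])Q_1)\dots)Q_n$ in the first case and $H(M)=M$ in the second. Resource terms: $s::=x\mid\lambda x.s\mid\langle s\rangle\bar t$, with $\bar t$ a finite multiset of resource terms; constructors are extended by linearity to finite sums (finite sets of resource terms). Resource substitution $s\langle\bar t/x\rangle$, for $\bar t=[t_1,\dots,t_n]$, is the sum over $\sigma\in\mathfrak S_n$ of the terms obtained by substituting $t_{\sigma(i)}$ for the $i$-th free occurrence of $x$ in $s$ if $x$ has exactly $n$ free occurrences, and $0$ (empty) otherwise. Every resource term is $s=\lambda x_1\dots\lambda x_m.\langle\dots\langle u\rangle\bar t_1\dots\rangle\bar t_n$ with $u$ a variable or a redex $\langle\lambda z.v\rangle\bar w$; in the latter case $H_r(s)=\lambda x_1\dots\lambda x_m.\langle\dots\langle v\langle\bar w/z\rangle\rangle\bar t_1\dots\rangle\bar t_n$ (a finite sum), otherwise $H_r(s)=s$.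 For a set $\mathcal S$ of resource terms, $H_r(\mathcal S)=\bigcup_{s\in\mathcal S}H_r(s)$. Taylor approximation $\ltimes$ is inductive: $x\ltimes x$; $s\ltimes M\Rightarrow\lambda x.s\ltimes\lambda x.M$; ($s\ltimes M$ and $t_i\ltimes N$ for all $i$) $\Rightarrow\langle s\rangle[t_1,\dots,t_n]\ltimes(M)N$; $\mathcal T(M)=\{s : s\ltimes M\}$. *)

(* Terms use de Bruijn indices (so alpha-equivalence is syntactic equality). *)
From Stdlib Require Import List Arith Permutation.
Import ListNotations.

CoInductive term : Type :=
| Var : nat -> term
| Lam : term -> term
| App : term -> term -> term.

(* An inductive (hence finite) path from M using only "body of lambda" and
   "function position of application" steps must end at a variable:
   i.e. there is no infinite branch avoiding argument positions. *)
Inductive WFleft : term -> Prop :=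
| wfl_var n : WFleft (Var n)
| wfl_lam M : WFleft M -> WFleft (Lam M)
| wfl_app M N : WFleft M -> WFleft (App M N).

(* Lambda^{001}: every subterm satisfies WFleft, i.e. every infinite branch
   enters the argument position of an application infinitely often. *)
CoInductive L001 : term -> Prop :=
| l001_var n : L001 (Var n)
| l001_lam M : WFleft M -> L001 M -> L001 (Lam M)
| l001_app M N : WFleft M -> L001 M -> L001 N -> L001 (App M N).

CoFixpoint lift (c : nat) (M : term) : term :=
  match M with
  | Var n => Var (if n <? c then n else S n)
  | Lam M1 => Lam (lift (S c) M1)
  | App M1 M2 => App (lift c M1) (lift c M2)
  end.

(* subst k N M : capture-avoiding substitution of N (already lifted to the
   current depth) for index k, decrementing the indices above k *)
CoFixpoint subst (k : nat) (N : term) (M : term) : term :=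
  match M with
  | Var n => if n =? k then N else Var (if k <? n then pred n else n)
  | Lam M1 => Lam (subst (S k) (lift 0 N) M1)
  | App M1 M2 => App (subst k N M1) (subst k N M2)
  end.

(* M[P/z] for the outermost binder z of lambda z.N *)
Definition subst0 (N P : term) : term := subst 0 P N.

Inductive is_head_var : term -> Prop :=
| hv_var n : is_head_var (Var n)
| hv_app M N : is_head_var M -> is_head_var (App M N).

Inductive is_hnf : term -> Prop :=
| hnf_head M : is_head_var M -> is_hnf M
| hnf_lam M : is_hnf M -> is_hnf (Lam M).

Inductive Hspine : term -> term -> Prop :=
| hs_redex N P : Hspine (App (Lam N) P) (subst0 N P)
| hs_app M M' Q : Hspine M M' -> Hspine (App M Q) (App M' Q).

(* IsH M HM : HM = H(M)  (the head reduct, or M itself if M is a hnf) *)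
Inductive IsH : term -> term -> Prop :=
| ish_lam M M' : IsH M M' -> IsH (Lam M) (Lam M')
| ish_spine M M' : Hspine M M' -> IsH M M'
| ish_hnf M : is_hnf M -> IsH M M.

(* ---------- Resource terms (bags are lists, taken modulo permutation) ---------- *)
Inductive rterm : Type :=
| RVar : nat -> rterm
| RLam : rterm -> rterm
| RApp : rterm -> list rterm -> rterm.

Inductive requiv : rterm -> rterm -> Prop :=
| req_var n : requiv (RVar n) (RVar n)
| req_lam s s' : requiv s s' -> requiv (RLam s) (RLam s')
| req_app s s' ts ts' ts'' :
    requiv s s' -> Permutation ts' ts'' -> Forall2 requiv ts ts'' ->
    requiv (RApp s ts) (RApp s' ts').

Fixpoint rshift (d c : nat) (s : rterm) : rterm :=
  match s with
  | RVar n => RVar (if n <? c then n else n + d)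
  | RLam s1 => RLam (rshift d (S c) s1)
  | RApp s1 ts => RApp (rshift d c s1) (map (rshift d c) ts)
  end.

(* LSub d ts s r : r is one of the summands of s<ts/x>, where x is the
   variable of index d (at binder depth d): each element of the bag ts is
   substituted for exactly one free occurrence of x, in all possible ways;
   no summand exists if the numbers do not match. *)
Inductive LSub : nat -> list rterm -> rterm -> rterm -> Prop :=
| ls_hit d t : LSub d [t] (RVar d) (rshift d 0 t)
| ls_miss d n : n <> d -> LSub d [] (RVar n) (RVar (if d <? n then pred n else n))
| ls_lam d ts s r : LSub (S d) ts s r -> LSub d ts (RLam s) (RLam r)
| ls_app d ts ts0 tss s r us us' :
    Permutation ts (ts0 ++ concat tss) ->
    LSub d ts0 s r -> LSubBag d tss us us' ->
    LSub d ts (RApp s us) (RApp r us')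
with LSubBag : nat -> list (list rterm) -> list rterm -> list rterm -> Prop :=
| lsb_nil d : LSubBag d [] [] []
| lsb_cons d ts tss u us u' us' :
    LSub d ts u u' -> LSubBag d tss us us' -> LSubBag d (ts :: tss) (u :: us) (u' :: us').

Inductive ris_head_var : rterm -> Prop :=
| rhv_var n : ris_head_var (RVar n)
| rhv_app s ts : ris_head_var s -> ris_head_var (RApp s ts).

Inductive ris_hnf : rterm -> Prop :=
| rhnf_head s : ris_head_var s -> ris_hnf s
| rhnf_lam s : ris_hnf s -> ris_hnf (RLam s).

Inductive HRspine : rterm -> rterm -> Prop :=
| hrs_redex v w r : LSub 0 w v r -> HRspine (RApp (RLam v) w) r
| hrs_app s s' ts : HRspine s s' -> HRspine (RApp s ts) (RApp s' ts).

(* HR s r : r is a summand of H_r(s) *)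
Inductive HR : rterm -> rterm -> Prop :=
| hr_lam s r : HR s r -> HR (RLam s) (RLam r)
| hr_spine s r : HRspine s r -> HR s r
| hr_hnf s : ris_hnf s -> HR s s.

Definition rset := rterm -> Prop.

Inductive Tay : rterm -> term -> Prop :=
| tay_var n : Tay (RVar n) (Var n)
| tay_lam s M : Tay s M -> Tay (RLam s) (Lam M)
| tay_app s ts M N :
    Tay s M -> Forall (fun t => Tay t N) ts -> Tay (RApp s ts) (App M N).

Definition Taylor (M : term) : rset := fun s => Tay s M.

Definition Hr_set (S : rset) : rset := fun r => exists s, S s /\ HR s r.

Definition rset_eq (S1 S2 : rset) : Prop :=
  forall s, (exists s', requiv s s' /\ S1 s') <-> (exists s', requiv s s' /\ S2 s').

From Stdlib Require Import List Arith Lia Permutation.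
Import ListNotations.

(* Taylor expansion commutes with head reduction because it commutes with
   substitution: the approximants of M[P/z] are exactly the summands of
   v<ts/z> with v an approximant of M and ts a bag of approximants of P, the
   bag being split along the occurrences of z in v and each piece approximated
   independently. Along the head spine this gives H_r(T(M)) = T(H(M)) for a
   redex, and hnfs are fixed by both H and H_r. *)

Definition term_unfold (M : term) : term :=
  match M with Var n => Var n | Lam M1 => Lam M1 | App M1 M2 => App M1 M2 end.

Lemma term_unfold_eq M : M = term_unfold M.
Proof. destruct M; reflexivity. Qed.

Lemma lift_Var c n : lift c (Var n) = Var (if n <? c then n else S n).
Proof. rewrite (term_unfold_eq (lift c (Var n))); reflexivity. Qed.

Lemma lift_Lam c M : lift c (Lam M) = Lam (lift (S c) M).
Proof. rewrite (term_unfold_eq (lift c (Lam M))); reflexivity. Qed.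

Lemma lift_App c M1 M2 : lift c (App M1 M2) = App (lift c M1) (lift c M2).
Proof. rewrite (term_unfold_eq (lift c (App M1 M2))); reflexivity. Qed.

Lemma subst_Var k N n :
  subst k N (Var n) = if n =? k then N else Var (if k <? n then pred n else n).
Proof.
  rewrite (term_unfold_eq (subst k N (Var n))); simpl.
  destruct (n =? k); [destruct N|]; reflexivity.
Qed.

Lemma subst_Lam k N M : subst k N (Lam M) = Lam (subst (S k) (lift 0 N) M).
Proof. rewrite (term_unfold_eq (subst k N (Lam M))); reflexivity. Qed.

Lemma subst_App k N M1 M2 : subst k N (App M1 M2) = App (subst k N M1) (subst k N M2).
Proof. rewrite (term_unfold_eq (subst k N (App M1 M2))); reflexivity. Qed.

Fixpoint rterm_nested_ind (P : rterm -> Prop) (HV : forall n, P (RVar n))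
  (HL : forall s, P s -> P (RLam s))
  (HA : forall s ts, P s -> Forall P ts -> P (RApp s ts)) (s : rterm) : P s :=
  match s with
  | RVar n => HV n
  | RLam s1 => HL s1 (rterm_nested_ind P HV HL HA s1)
  | RApp s1 ts => HA s1 ts (rterm_nested_ind P HV HL HA s1)
      ((fix bag (l : list rterm) : Forall P l :=
          match l with
          | [] => Forall_nil P
          | t :: l' => Forall_cons t (rterm_nested_ind P HV HL HA t) (bag l')
          end) ts)
  end.

Scheme LSub_mut_ind := Induction for LSub Sort Prop
  with LSubBag_mut_ind := Induction for LSubBag Sort Prop.
Combined Scheme LSub_LSubBag_ind from LSub_mut_ind, LSubBag_mut_ind.

Lemma Forall_exists_map {A B} (f : A -> B) (Q : A -> Prop) (l : list B) :
  Forall (fun b => exists a, b = f a /\ Q a) l -> exists l', l = map f l' /\ Forall Q l'.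
Proof.
  induction 1 as [|b l [a [-> Ha]] _ [l' [-> Hl']]].
  - exists []; auto.
  - exists (a :: l'); auto.
Qed.

Lemma rshift_0 t c : rshift 0 c t = t.
Proof.
  revert c; induction t as [n|s IH|s ts IH IHts] using rterm_nested_ind;
    intros c; simpl.
  - destruct (n <? c); f_equal; lia.
  - now rewrite IH.
  - rewrite IH; f_equal.
    rewrite <- (map_id ts) at 2; apply map_ext_in.
    intros t Ht; exact (proj1 (Forall_forall _ _) IHts t Ht c).
Qed.

Lemma rshift_1_rshift t d c : rshift 1 c (rshift d c t) = rshift (S d) c t.
Proof.
  revert c; induction t as [n|s IH|s ts IH IHts] using rterm_nested_ind;
    intros c; simpl.
  - destruct (Nat.ltb_spec n c) as [Hn|Hn].
    + now rewrite (proj2 (Nat.ltb_lt n c) Hn).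
    + rewrite (proj2 (Nat.ltb_ge (n + d) c)) by lia; f_equal; lia.
  - now rewrite IH.
  - rewrite IH, map_map; f_equal; apply map_ext_in.
    intros t Ht; exact (proj1 (Forall_forall _ _) IHts t Ht c).
Qed.

(** * Taylor expansion and lifting *)

Lemma Tay_lift t c P : Tay t P -> Tay (rshift 1 c t) (lift c P).
Proof.
  revert c P; induction t as [n|s IH|s ts IH IHts] using rterm_nested_ind;
    intros c P HT; inversion HT as [|? M1 HM1|? ? M1 N HM1 Hts]; subst; simpl.
  - rewrite lift_Var; destruct (n <? c); [|rewrite Nat.add_1_r]; constructor.
  - rewrite lift_Lam; constructor; auto.
  - rewrite lift_App; constructor; auto.
    apply Forall_map; rewrite Forall_forall in *; auto.
Qed.

Lemma Tay_lift_inv r c P : Tay r (lift c P) -> exists t, r = rshift 1 c t /\ Tay t P.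
Proof.
  revert c P; induction r as [n|s IH|s ts IH IHts] using rterm_nested_ind;
    intros c [m|P1|P1 P2] HT;
    rewrite ?lift_Var, ?lift_Lam, ?lift_App in HT;
    inversion HT as [|? ? Hs|? ? ? ? Hs Hts]; subst.
  - exists (RVar m); split; [simpl; destruct (m <? c); f_equal; lia|constructor].
  - destruct (IH _ _ Hs) as [t [-> Ht]].
    exists (RLam t); split; [reflexivity|constructor; auto].
  - destruct (IH _ _ Hs) as [t [-> Ht]].
    destruct (Forall_exists_map (rshift 1 c) (fun u => Tay u P2) ts) as [us [-> Hus]].
    { rewrite Forall_forall in *; intros u Hu; apply IHts; auto. }
    exists (RApp t us); split; [reflexivity|constructor; auto].
Qed.

Lemma Tay_lift0_iter t d P : Tay t P -> Tay (rshift d 0 t) (Nat.iter d (lift 0) P).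
Proof.
  induction d as [|d IH]; intros HT; simpl.
  - now rewrite rshift_0.
  - rewrite <- rshift_1_rshift; apply Tay_lift; auto.
Qed.

Lemma Tay_lift0_iter_inv r d P :
  Tay r (Nat.iter d (lift 0) P) -> exists t, r = rshift d 0 t /\ Tay t P.
Proof.
  revert r; induction d as [|d IH]; intros r HT; simpl in HT.
  - exists r; now rewrite rshift_0.
  - destruct (Tay_lift_inv _ _ _ HT) as [r' [-> Hr']].
    destruct (IH _ Hr') as [t [-> Ht]].
    exists t; split; [apply rshift_1_rshift|exact Ht].
Qed.

(** * Taylor expansion and substitution *)

(* At binder depth d the substituted term is P lifted d times, matching the
   [rshift d 0 t] performed by [ls_hit]. *)
Lemma Tay_LSub_LSubBag P :
  (forall d ts v r, LSub d ts v r -> forall M,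
     Forall (fun t => Tay t P) ts -> Tay v M ->
     Tay r (subst d (Nat.iter d (lift 0) P) M)) /\
  (forall d tss us us', LSubBag d tss us us' -> forall M,
     Forall (fun t => Tay t P) (concat tss) -> Forall (fun u => Tay u M) us ->
     Forall (fun u => Tay u (subst d (Nat.iter d (lift 0) P) M)) us').
Proof.
  apply LSub_LSubBag_ind.
  - intros d t M Ht Hv; inversion Hv; subst.
    rewrite subst_Var, Nat.eqb_refl; apply Tay_lift0_iter.
    now inversion Ht.
  - intros d n Hnd M _ Hv; inversion Hv; subst.
    rewrite subst_Var, (proj2 (Nat.eqb_neq n d) Hnd); constructor.
  - intros d ts s r _ IH M Hts Hv; inversion Hv; subst.
    rewrite subst_Lam; constructor; apply IH; auto.
  - intros d ts ts0 tss s r us us' Hperm _ IHs _ IHus M Hts Hv.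
    inversion Hv; subst; rewrite subst_App.
    apply (Permutation_Forall Hperm), Forall_app in Hts as [Hts0 Htss].
    constructor; auto.
  - constructor.
  - intros d ts tss u us u' us' _ IHu _ IHus M Hts Hus; simpl in Hts.
    apply Forall_app in Hts as [Hts Htss]; inversion Hus; subst.
    constructor; auto.
Qed.

Lemma Tay_LSub P d ts v r M :
  LSub d ts v r -> Forall (fun t => Tay t P) ts -> Tay v M ->
  Tay r (subst d (Nat.iter d (lift 0) P) M).
Proof. intros HL; exact (proj1 (Tay_LSub_LSubBag P) d ts v r HL M). Qed.

Definition LSub_Tay_split d P M r : Prop :=
  exists v ts, Tay v M /\ Forall (fun t => Tay t P) ts /\ LSub d ts v r.

Lemma LSubBag_Tay_split d P M us' :
  Forall (LSub_Tay_split d P M) us' ->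
  exists tss us, LSubBag d tss us us' /\ Forall (fun u => Tay u M) us /\
    Forall (fun t => Tay t P) (concat tss).
Proof.
  induction 1 as [|u' us' [u [ts [Hu [Hts HL]]]] _ [tss [us [HB [Hus Htss]]]]].
  - exists [], []; repeat constructor.
  - exists (ts :: tss), (u :: us); repeat split; try constructor; auto.
    apply Forall_app; auto.
Qed.

Lemma Tay_subst_Var_inv r d P m :
  Tay r (subst d (Nat.iter d (lift 0) P) (Var m)) -> LSub_Tay_split d P (Var m) r.
Proof.
  rewrite subst_Var; destruct (Nat.eqb_spec m d) as [->|Hmd]; intros HT.
  - destruct (Tay_lift0_iter_inv _ _ _ HT) as [t [-> Ht]].
    exists (RVar d), [t]; repeat constructor; auto.
  - inversion HT; subst; exists (RVar m), []; repeat constructor; auto.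
Qed.

Lemma Tay_subst_inv r d P M :
  Tay r (subst d (Nat.iter d (lift 0) P) M) -> LSub_Tay_split d P M r.
Proof.
  revert d M; induction r as [n|s IH|s ts IH IHts] using rterm_nested_ind;
    intros d [m|M1|M1 M2] HT; try now apply Tay_subst_Var_inv.
  all: rewrite ?subst_Lam, ?subst_App in HT;
    inversion HT as [|? ? Hs|? ? ? ? Hs Hts]; subst.
  - destruct (IH (S d) M1 Hs) as [v [ts [Hv [Hts HL]]]].
    exists (RLam v), ts; repeat constructor; auto.
  - destruct (IH d M1 Hs) as [v [ts0 [Hv [Hts0 HL]]]].
    destruct (LSubBag_Tay_split d P M2 ts) as [tss [us [HB [Hus Htss]]]].
    { rewrite Forall_forall in *; intros u Hu; apply IHts; auto. }
    exists (RApp v us), (ts0 ++ concat tss); repeat split.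
    + constructor; auto.
    + apply Forall_app; auto.
    + eapply ls_app; eauto.
Qed.

(** * Head normal forms *)

Lemma Tay_is_head_var t M : Tay t M -> ris_head_var t -> is_head_var M.
Proof.
  intros HT Hh; revert M HT; induction Hh; intros M HT; inversion HT; subst;
    constructor; auto.
Qed.

Lemma Tay_ris_head_var t M : Tay t M -> is_head_var M -> ris_head_var t.
Proof.
  intros HT Hh; revert t HT; induction Hh; intros t HT; inversion HT; subst;
    constructor; auto.
Qed.

Lemma Tay_is_hnf t M : Tay t M -> ris_hnf t -> is_hnf M.
Proof.
  intros HT Hh; revert M HT; induction Hh as [t Ht|t _ IH]; intros M HT.
  - constructor; eapply Tay_is_head_var; eauto.
  - inversion HT; subst; apply hnf_lam; auto.
Qed.

Lemma Tay_ris_hnf t M : Tay t M -> is_hnf M -> ris_hnf t.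
Proof.
  intros HT Hh; revert t HT; induction Hh as [M HM|M _ IH]; intros t HT.
  - constructor; eapply Tay_ris_head_var; eauto.
  - inversion HT; subst; apply rhnf_lam; auto.
Qed.

Lemma Hspine_not_head_var M M' : Hspine M M' -> ~ is_head_var M.
Proof.
  induction 1 as [N P|M M' Q _ IH]; intros Hh; inversion Hh as [|? ? Hh']; subst.
  - inversion Hh'.
  - auto.
Qed.

Lemma HRspine_not_ris_head_var t s : HRspine t s -> ~ ris_head_var t.
Proof.
  induction 1 as [v w r _|t s ts _ IH]; intros Hh; inversion Hh as [|? ? Hh']; subst.
  - inversion Hh'.
  - auto.
Qed.

Lemma Hspine_not_hnf M M' : Hspine M M' -> ~ is_hnf M.
Proof.
  intros HS Hh; inversion Hh; subst.
  - eapply Hspine_not_head_var; eauto.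
  - inversion HS.
Qed.

Lemma IsH_hnf M M' : IsH M M' -> is_hnf M -> M' = M.
Proof.
  induction 1 as [M M' _ IH|M M' HS|M _]; intros Hh.
  - inversion Hh as [? Hv|]; subst; [inversion Hv|now rewrite IH].
  - exfalso; eapply Hspine_not_hnf; eauto.
  - reflexivity.
Qed.

Lemma HR_Tay_hnf t s M : is_hnf M -> Tay t M -> HR t s -> s = t.
Proof.
  intros Hh; revert t s; induction Hh as [M HM|M _ IH]; intros t s HT HR'.
  - pose proof (Tay_ris_head_var _ _ HT HM) as Ht.
    inversion HR'; subst.
    + inversion Ht.
    + exfalso; eapply HRspine_not_ris_head_var; eauto.
    + reflexivity.
  - inversion HT; subst; inversion HR' as [? ? HR''| ? ? HS|]; subst.
    + f_equal; eapply IH; eauto.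
    + inversion HS.
    + reflexivity.
Qed.

(** * Head reduction *)

Lemma Hspine_Tay_HRspine M M' t s : Hspine M M' -> Tay t M -> HRspine t s -> Tay s M'.
Proof.
  intros HS; revert t s; induction HS as [N P|M M' Q HS IH]; intros t s HT HRS.
  - inversion HT as [| |? ts ? ? HN Hts]; subst.
    inversion HN as [|v ? Hv|]; subst.
    inversion HRS as [? ? ? HL|? ? ? HRS']; subst.
    + exact (Tay_LSub P 0 ts _ _ _ HL Hts Hv).
    + inversion HRS'.
  - inversion HT as [| |t' ts ? ? Ht' Hts]; subst.
    inversion HRS as [? ? ? HL|? ? ? HRS']; subst.
    + inversion Ht'; subst; inversion HS.
    + constructor; eauto.
Qed.

Lemma Tay_Hspine_inv M M' s : Hspine M M' -> Tay s M' -> exists t, Tay t M /\ HRspine t s.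
Proof.
  intros HS; revert s; induction HS as [N P|M M' Q _ IH]; intros s HT.
  - destruct (Tay_subst_inv s 0 P N HT) as [v [ts [Hv [Hts HL]]]].
    exists (RApp (RLam v) ts); repeat constructor; auto.
  - inversion HT as [| |s' ts ? ? Hs' Hts]; subst.
    destruct (IH _ Hs') as [t [Ht HRS]].
    exists (RApp t ts); split; constructor; auto.
Qed.

Lemma IsH_Tay_HR M HM t s : IsH M HM -> Tay t M -> HR t s -> Tay s HM.
Proof.
  intros HI; revert t s; induction HI as [M M' HI IH|M M' HS|M Hh];
    intros t s HT HR'.
  - inversion HT as [|t' ? Ht'|]; subst.
    inversion HR' as [? ? HR''|? ? HS|? Hh]; subst.
    + constructor; eauto.
    + inversion HS.
    + inversion Hh as [? Hv|? Hh']; subst; [inversion Hv|].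
      rewrite (IsH_hnf _ _ HI (Tay_is_hnf _ _ Ht' Hh')); constructor; auto.
  - inversion HR' as [? ? _|? ? HRS|? Hh]; subst.
    + inversion HT; subst; inversion HS.
    + eapply Hspine_Tay_HRspine; eauto.
    + exfalso; eapply Hspine_not_hnf; [exact HS|eapply Tay_is_hnf; eauto].
  - now rewrite (HR_Tay_hnf _ _ _ Hh HT HR').
Qed.

Lemma Tay_IsH_inv M HM s : IsH M HM -> Tay s HM -> exists t, Tay t M /\ HR t s.
Proof.
  intros HI; revert s; induction HI as [M M' _ IH|M M' HS|M Hh]; intros s HT.
  - inversion HT as [|s' ? Hs'|]; subst.
    destruct (IH _ Hs') as [t [Ht HR']].
    exists (RLam t); split; constructor; auto.
  - destruct (Tay_Hspine_inv _ _ _ HS HT) as [t [Ht HRS]].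
    exists t; split; [exact Ht|apply hr_spine, HRS].
  - exists s; split; [exact HT|apply hr_hnf; eapply Tay_ris_hnf; eauto].
Qed.

Theorem mainTheorem9 :
  forall M : term, L001 M ->
  forall HM : term, IsH M HM ->
  rset_eq (Hr_set (Taylor M)) (Taylor HM).
Proof.
  intros M _ HM HI s; split.
  - intros [s' [Hs' [t [Ht HR']]]].
    exists s'; split; [exact Hs'|exact (IsH_Tay_HR _ _ _ _ HI Ht HR')].
  - intros [s' [Hs' Ht]].
    destruct (Tay_IsH_inv _ _ _ HI Ht) as [t [Ht' HR']].
    exists s'; split; [exact Hs'|exists t; split; assumption].
Qed.
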